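(* Let $\mathcal{G}=(\mathcal{N},\mathcal{E})$ be a connected meshed graph (containing at least one cycle) with $N$ nodes and $E$ edges, and let $A\in\mathbb{R}^{E\times N}$ be its edge-node incidence matrix. Let $f\in\mathbb{R}^E$. Then there exist $x\in\mathbb{R}^E$ with $x>\mathbf{0}$ (entrywise) and $\theta\in\mathbb{R}^N$ such that $$\operatorname{diag}(f)\,x=A\theta$$ if and only if for every $n\in\operatorname{null}(A^\top)$ one of the following holds: (1) $f\odot n=\mathbf{0}$; or (2) there exist indices $i,j$ such that $(f\odot n)_i>0$ and $(f\odot n)_j<0$.
   Context: Incidence matrix: after assigning an arbitrary direction $e=(m,n)$ to each edge, $A_{e,k}=+1$ if $k=m$, $A_{e,k}=-1$ if $k=n$, and $A_{e,k}=0$ otherwise. $\odot$ denotes the entrywise product of vectors, and $\operatorname{diag}(v)$ the diagonal matrix with diagonal $v$. $\operatorname{null}(A^\top)=\{n\in\mathbb{R}^E: A^\top n=\mathbf{0}\}$. *)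

From HB Require Import structures.
From mathcomp Require Import all_boot all_order all_algebra.
Set Implicit Arguments. Unset Strict Implicit. Unset Printing Implicit Defensive.
Import Order.TTheory GRing.Theory Num.Theory.
Local Open Scope ring_scope.

(* A graph with nodes 'I_N and edges 'I_E; each edge e is given an
   (arbitrary) direction e = (src e, dst e). *)

Definition simple_graph (N E : nat) (src dst : 'I_E -> 'I_N) : Prop :=
  (forall e, src e != dst e) /\
  (forall e e', ((src e == src e') && (dst e == dst e')) ||
                ((src e == dst e') && (dst e == src e')) -> e = e').

Definition adj (N E : nat) (src dst : 'I_E -> 'I_N) : rel 'I_N :=
  fun k l => [exists e, ((src e == k) && (dst e == l)) ||
                        ((src e == l) && (dst e == k))].

Definition graph_connected (N E : nat) (src dst : 'I_E -> 'I_N) : Prop :=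
  forall k l : 'I_N, connect (adj src dst) k l.

Definition has_cycle (N E : nat) (src dst : 'I_E -> 'I_N) : Prop :=
  exists s : seq 'I_N, [/\ 3 <= size s, uniq s & cycle (adj src dst) s]%N.

Definition incidence (R : nzRingType) (N E : nat) (src dst : 'I_E -> 'I_N)
  : 'M[R]_(E, N) :=
  \matrix_(e < E, k < N)
    (if k == src e then 1 else if k == dst e then -1 else 0).

Definition hadamard (R : nzRingType) (E : nat) (u v : 'cV[R]_E) : 'cV[R]_E :=
  \col_(i < E) (u i 0 * v i 0).

Definition diagc (R : nzRingType) (E : nat) (v : 'cV[R]_E) : 'M[R]_E :=
  diag_mx v^T.

From HB Require Import structures.
From mathcomp Require Import all_boot all_order all_algebra.
From mathcomp Require Import lra.
Import Order.TTheory GRing.Theory Num.Theory.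
Local Open Scope ring_scope.
Set Implicit Arguments. Unset Strict Implicit.

(* If [diag(f) x = A theta] with [x > 0] and [A^T n = 0], then
   [sum_e x_e (f n)_e = theta^T A^T n = 0], so [f n] is zero or has both signs.
   Conversely, orient every edge with [f_e <> 0] along the sign of [f_e] and
   let edges with [f_e = 0] be used both ways.  A closed walk through an
   oriented edge would yield a circulation [n] with [f n >= 0] and [f n <> 0],
   which the hypothesis excludes; hence the potential
   [theta_k = #{nodes reachable from k through some oriented edge}] strictly
   decreases along oriented edges and is constant along the others, i.e.
   [A theta] has the sign pattern of [f], and [x_e = (A theta)_e / f_e]
   (or [1] when [f_e = 0]) is a positive solution. *)

Lemma pos_weighted_sum_eq0 (R : numDomainType) (E : nat) (x v : 'cV[R]_E) :
  (forall e, 0 < x e 0) -> (forall e, 0 <= v e 0) ->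
  \sum_e x e 0 * v e 0 = 0 -> v = 0.
Proof.
move=> xpos vge0 sum0; apply/matrixP => e j; rewrite (ord1 j) mxE.
have xv_ge0 i : 0 <= x i 0 * v i 0 by exact: mulr_ge0 (ltW (xpos i)) (vge0 i).
have /eqP := psumr_eq0P (fun i _ => xv_ge0 i) sum0 (i := e) isT.
by rewrite mulf_eq0 (gt_eqF (xpos e)) => /eqP.
Qed.

Lemma pos_weighted_sum_eq0_signs (R : realDomainType) (E : nat)
    (x v : 'cV[R]_E) :
  (forall e, 0 < x e 0) -> \sum_e x e 0 * v e 0 = 0 ->
  v = 0 \/ exists i j, 0 < v i 0 /\ v j 0 < 0.
Proof.
move=> xpos sum0.
have [/existsP[i vi_gt0]|/existsPn no_pos] := boolP [exists i, 0 < v i 0].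
  have [/existsP[j vj_lt0]|/existsPn no_neg] := boolP [exists j, v j 0 < 0].
    by right; exists i, j.
  by left; apply: pos_weighted_sum_eq0 xpos _ sum0 => e; rewrite leNgt no_neg.
left; apply/oppr_inj; rewrite oppr0.
apply: pos_weighted_sum_eq0 xpos _ _ => [e|].
  by rewrite mxE oppr_ge0 leNgt no_pos.
by under eq_bigr do rewrite mxE mulrN; rewrite sumrN sum0 oppr0.
Qed.

Lemma diag_solution_null_sum (R : comNzRingType) (N E : nat)
    (A : 'M[R]_(E, N)) (f x : 'cV[R]_E) (theta : 'cV[R]_N) (n : 'cV[R]_E) :
  diagc f *m x = A *m theta -> A^T *m n = 0 ->
  \sum_e x e 0 * hadamard f n e 0 = 0.
Proof.
move=> sol null.
transitivity (((diagc f *m x)^T *m n) 0 0).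
  by rewrite mxE; apply: eq_bigr => e _; rewrite /diagc mul_diag_mx !mxE mulrCA mulrA.
by rewrite sol trmx_mul -mulmxA null mulmx0 mxE.
Qed.

Lemma diag_solution_pos (R : realFieldType) (E : nat) (f y : 'cV[R]_E) :
  (forall e, Num.sg (y e 0) = Num.sg (f e 0)) ->
  exists x : 'cV[R]_E, (forall e, 0 < x e 0) /\ diagc f *m x = y.
Proof.
move=> sg_yf.
exists (\col_e (if f e 0 == 0 then 1 else y e 0 / f e 0)); split.
  move=> e; rewrite mxE; have [//|fn0] := eqVneq (f e 0) 0.
  rewrite -sgr_gt0 sgrM sgrV sg_yf -sgrM sgr_gt0.
  by rewrite lt0r mulf_neq0 //= -expr2 sqr_ge0.
apply/matrixP => e j; rewrite (ord1 j) /diagc mul_diag_mx !mxE.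
have [f0|fn0] := eqVneq (f e 0) 0; last by rewrite mulrC divfK.
by move: (sg_yf e); rewrite f0 sgr0 mul0r => /eqP; rewrite sgr_eq0 => /eqP.
Qed.

Section Incidence.
Variables (R : nzRingType) (N E : nat) (src dst : 'I_E -> 'I_N).
Hypothesis no_loop : forall e, src e != dst e.
Local Notation A := (incidence R src dst).

Lemma tr_incidence_delta e :
  A^T *m (delta_mx e 0 : 'cV_E) = delta_mx (src e) 0 - delta_mx (dst e) 0.
Proof.
apply/matrixP => k j; rewrite !mxE (bigD1 e) //= big1 ?addr0; last first.
  by move=> i /negbTE ie; rewrite !mxE ie mulr0.
rewrite !mxE eqxx (ord1 j) eqxx !andbT mulr1.
have [->|_] := eqVneq k (src e); first by rewrite (negbTE (no_loop e)) subr0.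
by case: eqVneq; rewrite ?subrr //= sub0r.
Qed.

Lemma mul_incidence_mxE (theta : 'cV[R]_N) e :
  (A *m theta) e 0 = theta (src e) 0 - theta (dst e) 0.
Proof.
rewrite mxE (bigD1 (src e)) //= (bigD1 (dst e)) /=; last by rewrite eq_sym no_loop.
rewrite big1 ?addr0; last first.
  by move=> k /andP[/negbTE k1 /negbTE k2]; rewrite mxE k1 k2 mul0r.
by rewrite !mxE eqxx eq_sym (negbTE (no_loop e)) eqxx mul1r mulN1r.
Qed.

End Incidence.

Section SignPotential.
Variables (R : realDomainType) (N E : nat) (src dst : 'I_E -> 'I_N).
Variable f : 'cV[R]_E.
Hypothesis no_loop : forall e, src e != dst e.
Local Notation A := (incidence R src dst).
Local Notation dl k := (delta_mx k 0 : 'cV[R]_N).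

Definition strict_step : rel 'I_N := fun k l =>
  [exists e, ((0 < f e 0) && (src e == k) && (dst e == l)) ||
             ((f e 0 < 0) && (dst e == k) && (src e == l))].

Definition flat_step : rel 'I_N := fun k l =>
  [exists e, (f e 0 == 0) && (((src e == k) && (dst e == l)) ||
                              ((src e == l) && (dst e == k)))].

Definition weak_step : rel 'I_N := fun k l => strict_step k l || flat_step k l.

Definition conformal (n : 'cV[R]_E) := forall e, 0 <= f e 0 * n e 0.

Lemma conformalD n n' : conformal n -> conformal n' -> conformal (n + n').
Proof. by move=> cn cn' e; rewrite mxE mulrDr addr_ge0. Qed.

Lemma conformal_delta e c : 0 <= f e 0 * c -> conformal (c *: delta_mx e 0).
Proof.
move=> fc i; rewrite !mxE.
by have [->|/negbTE ie] := eqVneq i e; rewrite ?eqxx ?ie /= ?mulr1 ?mulr0.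
Qed.

Lemma strict_step_flow k l : strict_step k l ->
  exists n, [/\ A^T *m n = dl k - dl l, conformal n & exists e, 0 < f e 0 * n e 0].
Proof.
case/existsP=> e /orP[/andP[/andP[f_gt0 /eqP<-] /eqP<-]|/andP[/andP[f_lt0 /eqP<-] /eqP<-]].
  exists (1 *: delta_mx e 0); split.
  - by rewrite scale1r tr_incidence_delta.
  - by apply: conformal_delta; rewrite mulr1 ltW.
  - by exists e; rewrite !mxE !eqxx !mulr1.
exists (-1 *: delta_mx e 0); split.
- by rewrite scaleN1r mulmxN tr_incidence_delta // opprB.
- by apply: conformal_delta; rewrite mulrN1 oppr_ge0 ltW.
- by exists e; rewrite !mxE !eqxx mulr1 mulrN1 oppr_gt0.
Qed.

Lemma weak_step_flow k l : weak_step k l ->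
  exists n, A^T *m n = dl k - dl l /\ conformal n.
Proof.
case/orP; first by case/strict_step_flow=> n [? ? _]; exists n.
case/existsP=> e /andP[/eqP f0 /orP[/andP[/eqP<- /eqP<-]|/andP[/eqP<- /eqP<-]]].
  exists (1 *: delta_mx e 0); split; last by apply: conformal_delta; rewrite f0 mul0r.
  by rewrite scale1r tr_incidence_delta.
exists (-1 *: delta_mx e 0); split; last by apply: conformal_delta; rewrite f0 mul0r.
by rewrite scaleN1r mulmxN tr_incidence_delta // opprB.
Qed.

Lemma weak_path_flow k l : connect weak_step k l ->
  exists n, A^T *m n = dl k - dl l /\ conformal n.
Proof.
case/connectP=> p; elim: p k => [|m p IHp] k /= => [_ ->|/andP[km mp] l_last].
  by exists 0; split=> [|e]; rewrite ?mulmx0 ?subrr // mxE mulr0.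
have [n1 [flow1 c1]] := weak_step_flow km.
have [n2 [flow2 c2]] := IHp m mp l_last.
by exists (n1 + n2); rewrite mulmxDr flow1 flow2 addrA subrK; split; last exact: conformalD.
Qed.

Definition descends k l := [exists a, exists b,
  [&& connect weak_step k a, strict_step a b & connect weak_step b l]].

Definition descendants k := [set l | descends k l].

Lemma descendants_weak_step k l :
  connect weak_step k l -> descendants l \subset descendants k.
Proof.
move=> kl; apply/subsetP => m; rewrite !inE.
case/existsP=> a /existsP[b /and3P[la ab bm]].
by apply/existsP; exists a; apply/existsP; exists b; rewrite ab bm (connect_trans kl).
Qed.

Hypothesis conformal_circulation_eq0 : forall n, A^T *m n = 0 -> conformal n ->
  forall e, f e 0 * n e 0 = 0.

Lemma descends_irrefl k : ~~ descends k k.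
Proof.
apply/negP => /existsP[a /existsP[b /and3P[ka ab bk]]].
have [n1 [flow1 c1]] := weak_path_flow ka.
have [n2 [flow2 c2 [e pos_e]]] := strict_step_flow ab.
have [n3 [flow3 c3]] := weak_path_flow bk.
have circ : A^T *m (n1 + n2 + n3) = 0.
  by rewrite !mulmxDr flow1 flow2 flow3 !addrA !subrK subrr.
have := conformal_circulation_eq0 circ (conformalD (conformalD c1 c2) c3) e.
by rewrite !mxE !mulrDr; have := c1 e; have := c3 e; lra.
Qed.

Lemma strict_step_descendants k l :
  strict_step k l -> (#|descendants l| < #|descendants k|)%N.
Proof.
move=> kl; apply/proper_card/properP; split.
  by apply/descendants_weak_step/connect1; rewrite /weak_step kl.
exists l; rewrite !inE ?(negbTE (descends_irrefl l)) //.
by apply/existsP; exists k; apply/existsP; exists l; rewrite kl !connect0.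
Qed.

Definition height : 'cV[R]_N := \col_k #|descendants k|%:R.

Lemma sg_incidence_height e : Num.sg ((A *m height) e 0) = Num.sg (f e 0).
Proof.
rewrite mul_incidence_mxE // !mxE.
case: (ltrgtP (f e 0) 0) => [f_lt0|f_gt0|f0].
- rewrite (ltr0_sg f_lt0) ltr0_sg // subr_lt0 ltr_nat; apply: strict_step_descendants.
  by apply/existsP; exists e; rewrite f_lt0 !eqxx orbT.
- rewrite (gtr0_sg f_gt0) gtr0_sg // subr_gt0 ltr_nat; apply: strict_step_descendants.
  by apply/existsP; exists e; rewrite f_gt0 !eqxx.
- suff -> : descendants (src e) = descendants (dst e) by rewrite subrr f0 sgr0.
  have flat k l : flat_step k l -> weak_step k l by rewrite /weak_step orbC => ->.
  have [se es] : flat_step (src e) (dst e) /\ flat_step (dst e) (src e).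
    by split; apply/existsP; exists e; rewrite f0 !eqxx ?orbT.
  by apply/eqP; rewrite eqEsubset !descendants_weak_step ?connect1 ?flat.
Qed.

End SignPotential.

Lemma mixed_signs_conformal_eq0 (R : realDomainType) (E : nat) (f n : 'cV[R]_E) :
  (hadamard f n = 0 \/ exists i j, 0 < hadamard f n i 0 /\ hadamard f n j 0 < 0) ->
  conformal f n -> forall e, f e 0 * n e 0 = 0.
Proof.
case=> [/matrixP fn0 _ e | [i [j [_]]]]; first by have := fn0 e 0; rewrite !mxE.
by rewrite mxE => fn_lt0 /(_ j); rewrite leNgt fn_lt0.
Qed.

Theorem proposition3 (R : realFieldType) (N E : nat)
  (src dst : 'I_E -> 'I_N) (f : 'cV[R]_E) :
  simple_graph src dst ->
  graph_connected src dst ->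
  has_cycle src dst ->
  (exists (x : 'cV[R]_E) (theta : 'cV[R]_N),
      (forall e, 0 < x e 0) /\
      diagc f *m x = incidence R src dst *m theta)
  <->
  (forall n : 'cV[R]_E, (incidence R src dst)^T *m n = 0 ->
      hadamard f n = 0 \/
      exists i j : 'I_E, 0 < hadamard f n i 0 /\ hadamard f n j 0 < 0).
Proof.
move=> [no_loop _] _ _; split.
  move=> [x [theta [xpos sol]]] n null.
  exact/(pos_weighted_sum_eq0_signs xpos)/(diag_solution_null_sum sol null).
move=> signs.
have no_circ n (null : (incidence R src dst)^T *m n = 0) :=
  mixed_signs_conformal_eq0 (signs n null).
have [x [xpos sol]] := diag_solution_pos (sg_incidence_height no_loop no_circ).
by exists x, (height src dst f); split.
Qed.
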